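(* The function $q\mapsto (p(q)-c)\big(1-F(p(q)/q)\big)$ is strictly increasing on $Q$.
   Context: Let $0<q_\ell<q_h<\infty$, $Q=[q_\ell,q_h]$, and let $c$ be a real number with $0<c<q_\ell$. Let $F$ be a probability distribution on $[0,1]$ with support $[0,1]$ admitting a twice continuously differentiable density $f:(0,1)\to\mathbb{R}_{>0}$. Define $r(v)=(1-F(v))/f(v)$ and $\psi(v)=v-r(v)$ on $(0,1)$, and assume $\psi'(v)>0$ whenever $\psi(v)>0$. For $q\in Q$, $p(q)$ is the unique maximizer over $p\in\mathbb{R}$ of $(p-c)\big(1-F(p/q)\big)$. *)

From Stdlib Require Import Reals.
From Coquelicot Require Import Coquelicot.
Open Scope R_scope.

Definition is_density_cdf (F f : R -> R) : Prop :=
  (forall x, continuous F x) /\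
  (forall x, x <= 0 -> F x = 0) /\
  (forall x, 1 <= x -> F x = 1) /\
  (forall x, 0 < x < 1 -> is_derive F x (f x)).

Definition pos_C2_on_01 (f : R -> R) : Prop :=
  forall x, 0 < x < 1 ->
    0 < f x /\ ex_derive f x /\ ex_derive (Derive f) x /\
    continuous (Derive (Derive f)) x.

Definition rfun (F f : R -> R) (v : R) : R := (1 - F v) / f v.
Definition psi (F f : R -> R) (v : R) : R := v - rfun F f v.

Definition profit (F : R -> R) (c q p : R) : R := (p - c) * (1 - F (p / q)).

Definition is_unique_argmax (F : R -> R) (c q pq : R) : Prop :=
  (forall p, profit F c q p <= profit F c q pq) /\
  (forall p, profit F c q p = profit F c q pq -> p = pq).

From Stdlib Require Import Reals Lra.
From Coquelicot Require Import Coquelicot.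
Open Scope R_scope.

(* Moving from quality q1 to q2 > q1 while scaling the price by q2/q1 leaves
   the sale probability 1 - F (p/q) unchanged and raises the margin p - c.
   The margin p(q1) - c and the sale probability at p(q1) are positive,
   because the optimal profit beats the positive profit of any price strictly
   between c and q1.  Hence the optimal profit at q2 strictly exceeds that at
   q1. *)

Lemma lt_of_pos_derive (g dg : R -> R) (a b : R) :
  a < b ->
  (forall t, a <= t <= b -> continuous g t) ->
  (forall t, a < t < b -> is_derive g t (dg t)) ->
  (forall t, a < t < b -> 0 < dg t) ->
  g a < g b.
Proof.
  intros Hab Hcont Hder Hpos.
  (* [MVT_gen] may return an endpoint, where [dg] carries no information. *)
  set (dg' := fun t => if Rlt_dec a t then if Rlt_dec t b then dg t else 1 else 1).
  assert (Hdg' : forall t, 0 < dg' t).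
  { intros t. unfold dg'.
    destruct (Rlt_dec a t), (Rlt_dec t b); try lra. apply Hpos; lra. }
  destruct (MVT_gen g a b dg') as [t [_ Hmvt]].
  - rewrite Rmin_left, Rmax_right by lra. intros t Ht.
    unfold dg'. destruct (Rlt_dec a t), (Rlt_dec t b); try lra. now apply Hder.
  - rewrite Rmin_left, Rmax_right by lra. intros t Ht.
    apply continuity_pt_filterlim, Hcont; lra.
  - assert (0 < dg' t * (b - a)) by (apply Rmult_lt_0_compat; [apply Hdg' | lra]).
    lra.
Qed.

Section DensityCdf.

Variables F f : R -> R.
Hypothesis HF : is_density_cdf F f.
Hypothesis f_pos : forall x, 0 < x < 1 -> 0 < f x.

Lemma cdf_lt_1 (x : R) : x < 1 -> F x < 1.
Proof.
  destruct HF as [Hcont [H0 [H1 Hder]]]. intros Hx.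
  destruct (Rle_lt_dec x 0) as [Hx0 | Hx0].
  - rewrite H0 by exact Hx0. lra.
  - rewrite <- (H1 1) by lra.
    apply (lt_of_pos_derive F f); auto.
    + intros t Ht. apply Hder. lra.
    + intros t Ht. apply f_pos. lra.
Qed.

Lemma cdf_le_1 (x : R) : F x <= 1.
Proof.
  destruct (Rlt_le_dec x 1) as [Hx | Hx].
  - left. now apply cdf_lt_1.
  - destruct HF as [_ [_ [H1 _]]]. rewrite H1 by exact Hx. lra.
Qed.

Lemma profit_pos_at_midprice (c q : R) :
  0 < c < q -> 0 < profit F c q ((c + q) / 2).
Proof.
  intros Hcq. unfold profit. apply Rmult_lt_0_compat; [lra |].
  assert (F ((c + q) / 2 / q) < 1); [| lra].
  apply cdf_lt_1.
  apply Rmult_lt_reg_r with q; [lra |]. field_simplify; lra.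
Qed.

Lemma profit_pos_inv (c q p : R) :
  0 < profit F c q p -> c < p /\ F (p / q) < 1.
Proof.
  unfold profit. intros Hprof.
  assert (HFle := cdf_le_1 (p / q)).
  destruct (Rle_lt_dec p c) as [Hpc | Hpc].
  - assert ((p - c) * (1 - F (p / q)) <= 0) by (apply Rmult_le_0_r; lra). lra.
  - split; [exact Hpc |].
    destruct (Req_dec (F (p / q)) 1) as [Heq | Hne]; [| lra].
    rewrite Heq, Rminus_diag, Rmult_0_r in Hprof. lra.
Qed.

End DensityCdf.

Lemma profit_scale_quality (F : R -> R) (c q q' p : R) :
  0 < q -> 0 < q' ->
  profit F c q' (p * q' / q) = (p * q' / q - c) * (1 - F (p / q)).
Proof.
  intros Hq Hq'. unfold profit.
  replace (p * q' / q / q') with (p / q) by (field; lra). reflexivity.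
Qed.

Lemma profit_lt_scale_quality (F : R -> R) (c q1 q2 p : R) :
  0 < q1 < q2 -> c < p -> 0 < p -> F (p / q1) < 1 ->
  profit F c q1 p < profit F c q2 (p * q2 / q1).
Proof.
  intros Hq Hcp Hp HF1.
  rewrite profit_scale_quality by lra. unfold profit.
  apply Rmult_lt_compat_r; [lra |].
  assert (p < p * q2 / q1); [| lra].
  apply Rmult_lt_reg_r with q1; [lra |]. field_simplify; [| lra].
  apply Rmult_lt_compat_l; lra.
Qed.

Theorem lemma14 (ql qh c : R) (F f : R -> R) (p : R -> R) :
  0 < ql -> ql < qh -> 0 < c -> c < ql ->
  is_density_cdf F f ->
  pos_C2_on_01 f ->
  (forall v, 0 < v < 1 -> psi F f v > 0 -> Derive (psi F f) v > 0) ->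
  (forall q, ql <= q <= qh -> is_unique_argmax F c q (p q)) ->
  forall q1 q2, ql <= q1 -> q1 < q2 -> q2 <= qh ->
    profit F c q1 (p q1) < profit F c q2 (p q2).
Proof.
  intros Hql _ Hc Hcq HF Hf _ Hmax q1 q2 H1 H12 H2.
  assert (f_pos : forall x, 0 < x < 1 -> 0 < f x) by (intros x Hx; apply Hf, Hx).
  destruct (Hmax q1 ltac:(lra)) as [Hbest1 _].
  destruct (Hmax q2 ltac:(lra)) as [Hbest2 _].
  assert (Hprof1 : 0 < profit F c q1 (p q1)).
  { eapply Rlt_le_trans; [| apply Hbest1].
    apply (profit_pos_at_midprice F f HF f_pos). lra. }
  destruct (profit_pos_inv F f HF f_pos c q1 (p q1) Hprof1) as [Hmargin Hsale].
  eapply Rlt_le_trans; [| apply (Hbest2 (p q1 * q2 / q1))].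
  apply profit_lt_scale_quality; lra.
Qed.
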